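(* Let $F|R$ be an extension of ordered fields. If there is at least one non-ball cut in $R$ that is filled in $F$, then there exists no injective map $\mathcal C(R)\to\mathcal C(F)$ that is continuous with respect to the interval topologies and compatible with restriction.
   Context: For an ordered field $K$ with canonical valuation $v$ (valuation ring the convex hull of $\mathbb Z$), a cut is a pair $(D,E)$ with $D<E$ and $D\cup E=K$; $\mathcal C(K)$ is the set of cuts, ordered by $(D_1,E_1)<(D_2,E_2)$ iff $D_1\subsetneq D_2$. The interval topology on $\mathcal C(K)$ has basic open sets the intervals $(C_1,C_2)$, $(C_1,(K,\emptyset)]$ and $[(\emptyset,K),C_2)$. For $a\in K$ and a final segment $S$ of $vK$, $B_S(a,K)=\{b\in K\mid v(a-b)\in S\cup\{\infty\}\}$ is a ball. For nonempty $A\subseteq K$, $A^+=(D,K\setminus D)$ with $D$ the smallest initial segment containing $A$, and $A^-=(K\setminus E,E)$ with $E$ the smallest final segment containing $A$. A cut is a ball cut if it is $B^+$ or $B^-$ for some ball $B$, otherwise a non-ball cut. A cut $(D,E)$ of $R$ is filled in $F$ if some $a\in F$ satisfies $D<a<E$. The restriction of a cut $(D',E')$ of $F$ is $(D'\cap R,E'\cap R)$; a map $\tilde\iota:\mathcal C(R)\to\mathcal C(F)$ is compatible with restriction if the restriction of $\tilde\iota(C)$ is $C$ for every $C$. *)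

From mathcomp Require Import all_boot all_order all_algebra.
Set Implicit Arguments. Unset Strict Implicit. Unset Printing Implicit Defensive.
Import Order.TTheory GRing.Theory Num.Theory.
Local Open Scope ring_scope.

Section Cuts.
Variable K : realFieldType.

(* Canonical valuation v (valuation ring = convex hull of Z):
   v x <= v y  iff  y/x lies in the valuation ring, i.e. |y| <= n |x| for some n.
   (for x, y <> 0) *)
Definition vle (x y : K) : Prop := exists n : nat, `|y| <= n%:R * `|x|.

(* A final segment S of the value group vK, represented by the set of nonzero
   elements whose value lies in S: it is upward closed for the value order. *)
Definition vfinal (S : K -> Prop) : Prop :=
  forall x y, x != 0 -> y != 0 -> S x -> vle x y -> S y.

(* B_S(a,K) = { b | v(a - b) \in S \cup {oo} } *)
Definition ballS (S : K -> Prop) (a : K) : K -> Prop :=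
  fun b => a - b = 0 \/ (a - b != 0 /\ S (a - b)).

Definition is_ball (B : K -> Prop) : Prop :=
  exists (S : K -> Prop) (a : K), vfinal S /\ B = ballS S a.

(* A cut (D,E) with D < E, D \cup E = K is determined by its lower part D,
   an arbitrary initial segment of K (possibly empty or all of K); E = K \ D. *)
Record cut := Cut {
  cutD : K -> Prop;
  cutD_init : forall x y, y <= x -> cutD x -> cutD y }.

Definition cut_lt (C1 C2 : cut) : Prop :=
  (forall x, cutD C1 x -> cutD C2 x) /\ exists x, cutD C2 x /\ ~ cutD C1 x.

Definition basic_open (B : cut -> Prop) : Prop :=
  (exists C1 C2, B = fun C => cut_lt C1 C /\ cut_lt C C2) \/
  (exists C1, B = fun C => cut_lt C1 C) \/
  (exists C2, B = fun C => cut_lt C C2).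

Definition interval_open (U : cut -> Prop) : Prop :=
  forall C, U C -> exists B, basic_open B /\ B C /\ forall C', B C' -> U C'.

Definition cut_plus_D (A : K -> Prop) : K -> Prop :=
  fun x => exists a, A a /\ x <= a.
(* A^- : E = smallest final segment containing A, D = K \ E *)
Definition cut_minus_D (A : K -> Prop) : K -> Prop :=
  fun x => ~ exists a, A a /\ a <= x.

Definition ball_cut (C : cut) : Prop :=
  exists B, is_ball B /\ (cutD C = cut_plus_D B \/ cutD C = cut_minus_D B).

End Cuts.

Definition interval_continuous (K L : realFieldType) (f : cut K -> cut L) : Prop :=
  forall U, interval_open U -> interval_open (fun C => U (f C)).

(* Extension F|R of ordered fields given by an order embedding iota. *)
Definition filled (R F : realFieldType) (iota : R -> F) (C : cut R) : Prop :=
  exists a : F, (forall d, cutD C d -> iota d < a) /\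
                (forall e, ~ cutD C e -> a < iota e).

Definition restrict_cut_D (R F : realFieldType) (iota : R -> F) (C : cut F)
  : R -> Prop := fun x => cutD C (iota x).

Definition compatible_restriction (R F : realFieldType) (iota : R -> F)
  (f : cut R -> cut F) : Prop :=
  forall C, restrict_cut_D iota (f C) = cutD C.

From mathcomp Require Import all_boot all_order all_algebra.
From Stdlib Require Import Classical FunctionalExtensionality PropExtensionality.
Set Implicit Arguments. Unset Strict Implicit.
Import Order.TTheory GRing.Theory Num.Theory.
Local Open Scope ring_scope.

(* Points {x} and the whole field are balls, so the cuts {x}^-, {x}^+, (K,0)
   and (0,K) are ball cuts.  Hence a non-ball cut C has neither an immediate
   predecessor nor an immediate successor and is neither the top nor the bottom
   cut: every open set containing C contains cuts on both sides of C.  If a in F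
   fills C, the sets {C' | a in D'} and {C' | a notin D'} are open; whichever
   contains f C pulls back to an open set containing a cut C' on the wrong side
   of C, and an element of R between C and C' then contradicts compatibility
   with restriction. *)

Section Cuts.
Variable K : realFieldType.

Definition point_cut_minus (x : K) : cut K :=
  @Cut K (fun z => z < x) (fun _ _ yz zx => le_lt_trans yz zx).
Definition point_cut_plus (x : K) : cut K :=
  @Cut K (fun z => z <= x) (fun _ _ yz zx => le_trans yz zx).
Definition cut_top : cut K := @Cut K (fun _ => True) (fun _ _ _ _ => I).
Definition cut_bot : cut K := @Cut K (fun _ => False) (fun _ _ _ f => f).

Lemma cut_lt_trans (C1 C2 C3 : cut K) :
  cut_lt C1 C2 -> cut_lt C2 C3 -> cut_lt C1 C3.
Proof.
move=> [s12 [x [C2x nC1x]]] [s23 _]; split; first by move=> z /s12 /s23.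
by exists x; split=> //; apply: s23.
Qed.

Lemma point_cut_minus_lt (a : K) (C : cut K) :
  cut_lt (point_cut_minus a) C <-> cutD C a.
Proof.
split=> [[_ [x [Cx /negP]]] | Ca].
  by rewrite -leNgt => ax; exact: cutD_init ax Cx.
split; first by move=> z /ltW za; exact: cutD_init za Ca.
by exists a; split=> //=; rewrite ltxx.
Qed.

Lemma lt_point_cut_plus (a : K) (C : cut K) :
  cut_lt C (point_cut_plus a) <-> ~ cutD C a.
Proof.
split=> [[_ [x [/= xa nCx]]] Ca | nCa]; first exact/nCx/(cutD_init xa).
split; last by exists a; split=> /=.
by move=> z Cz /=; rewrite leNgt; apply/negP => /ltW az; exact/nCa/(cutD_init az).
Qed.

Lemma ball_cut_ext (C : cut K) (B : K -> Prop) : is_ball B ->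
  (forall z, cutD C z <-> cut_plus_D B z) \/
  (forall z, cutD C z <-> cut_minus_D B z) -> ball_cut C.
Proof.
move=> ballB CB; exists B; split=> //.
by case: CB => CB; [left | right];
   apply: functional_extensionality => z; apply: propositional_extensionality.
Qed.

Lemma is_ball_whole : is_ball (fun _ : K => True).
Proof.
exists (fun _ => True), 0; split=> //.
apply: functional_extensionality => b; apply: propositional_extensionality.
by split=> // _; case: (eqVneq (0 - b) 0); [left | right].
Qed.

Lemma is_ball_point (x : K) : is_ball (fun b => b = x).
Proof.
exists (fun _ => False), x; split=> //.
apply: functional_extensionality => b; apply: propositional_extensionality.
split=> [-> | [/eqP | [_ []]]]; first by left; rewrite subrr.
by rewrite subr_eq0 => /eqP.
Qed.

Lemma ball_cut_top (C : cut K) : (forall z, cutD C z) -> ball_cut C.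
Proof.
move=> CT; apply: (ball_cut_ext is_ball_whole); left=> z.
by split=> // _; exists z.
Qed.

Lemma ball_cut_bot (C : cut K) : (forall z, ~ cutD C z) -> ball_cut C.
Proof.
move=> CB; apply: (ball_cut_ext is_ball_whole); right=> z.
by split=> [/CB [] | nz]; case: nz; exists z.
Qed.

Lemma ball_cut_point_plus (C : cut K) (x : K) :
  (forall z, cutD C z <-> z <= x) -> ball_cut C.
Proof.
move=> Cx; apply: (ball_cut_ext (is_ball_point x)); left=> z.
by rewrite Cx; split=> [zx | [_ [-> //]]]; exists x.
Qed.

Lemma ball_cut_point_minus (C : cut K) (x : K) :
  (forall z, cutD C z <-> z < x) -> ball_cut C.
Proof.
move=> Cx; apply: (ball_cut_ext (is_ball_point x)); right=> z.
rewrite Cx ltNge; split=> [/negP xz [_ [-> //]] | nxz]; apply/negP => xz.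
by apply: nxz; exists x.
Qed.

Section NonBall.
Variable C : cut K.
Hypothesis nonballC : ~ ball_cut C.

Lemma nonball_cut_not_top : exists x, ~ cutD C x.
Proof.
apply: NNPP => nx; apply/nonballC/ball_cut_top => z.
by apply: NNPP => nz; apply: nx; exists z.
Qed.

Lemma nonball_cut_not_bot : exists x, cutD C x.
Proof.
by apply: NNPP => nx; apply/nonballC/ball_cut_bot => z Cz; apply: nx; exists z.
Qed.

Lemma nonball_cut_gap_above {C2 : cut K} :
  cut_lt C C2 -> exists C', cut_lt C C' /\ cut_lt C' C2.
Proof.
move=> [_ [x [C2x nCx]]].
have [[y [yx nCy]] | noy] := classic (exists y, y < x /\ ~ cutD C y).
  exists (point_cut_minus x); split; last exact/point_cut_minus_lt.
  split; last by exists y.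
  by move=> z Cz /=; rewrite ltNge; apply/negP => xz; exact/nCx/(cutD_init xz).
exfalso; apply/nonballC/(ball_cut_point_minus (x := x)) => z.
split=> [Cz | zx]; last by apply: NNPP => nCz; apply: noy; exists z.
by rewrite ltNge; apply/negP => xz; exact/nCx/(cutD_init xz).
Qed.

Lemma nonball_cut_gap_below {C1 : cut K} :
  cut_lt C1 C -> exists C', cut_lt C1 C' /\ cut_lt C' C.
Proof.
move=> [_ [x [Cx nC1x]]].
have [[y [xy Cy]] | noy] := classic (exists y, x < y /\ cutD C y).
  exists (point_cut_plus x); split; first exact/lt_point_cut_plus.
  split; first by move=> z /= zx; exact: cutD_init zx Cx.
  by exists y; split=> //= yx; move: xy; rewrite ltNge yx.
exfalso; apply/nonballC/(ball_cut_point_plus (x := x)) => z.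
split=> [Cz | zx]; last exact: cutD_init zx Cx.
by rewrite leNgt; apply/negP => xz; apply: noy; exists z.
Qed.

Lemma interval_open_above (U : cut K -> Prop) :
  interval_open U -> U C -> exists C', cut_lt C C' /\ U C'.
Proof.
move=> openU UC; have [B [basicB [BC BU]]] := openU C UC.
suff [C' [CC' BC']] : exists C', cut_lt C C' /\ B C'.
  by exists C'; split; last exact: BU.
case: basicB BC => [[C1 [C2 ->]] | [[C1 ->] | [C2 ->]]].
- move=> [C1C CC2]; have [C' [CC' C'C2]] := nonball_cut_gap_above CC2.
  by exists C'; split=> //; split=> //; exact: cut_lt_trans C1C CC'.
- move=> C1C; have [x nCx] := nonball_cut_not_top.
  have Ctop : cut_lt C cut_top by split=> //; exists x.
  by exists cut_top; split=> //; exact: cut_lt_trans C1C Ctop.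
- by move=> CC2; have [C' [CC' C'C2]] := nonball_cut_gap_above CC2; exists C'.
Qed.

Lemma interval_open_below (U : cut K -> Prop) :
  interval_open U -> U C -> exists C', cut_lt C' C /\ U C'.
Proof.
move=> openU UC; have [B [basicB [BC BU]]] := openU C UC.
suff [C' [C'C BC']] : exists C', cut_lt C' C /\ B C'.
  by exists C'; split; last exact: BU.
case: basicB BC => [[C1 [C2 ->]] | [[C1 ->] | [C2 ->]]].
- move=> [C1C CC2]; have [C' [C1C' C'C]] := nonball_cut_gap_below C1C.
  by exists C'; split=> //; split=> //; exact: cut_lt_trans C'C CC2.
- by move=> C1C; have [C' [C1C' C'C]] := nonball_cut_gap_below C1C; exists C'.
- move=> CC2; have [x Cx] := nonball_cut_not_bot.
  have botC : cut_lt cut_bot C by split=> [z []|]; exists x; split.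
  by exists cut_bot; split=> //; exact: cut_lt_trans botC CC2.
Qed.

End NonBall.

Lemma interval_open_mem (a : K) : interval_open (fun C : cut K => cutD C a).
Proof.
move=> C Ca; exists (cut_lt (point_cut_minus a)).
split; first by right; left; exists (point_cut_minus a).
by split=> [|C']; rewrite point_cut_minus_lt.
Qed.

Lemma interval_open_notmem (a : K) : interval_open (fun C : cut K => ~ cutD C a).
Proof.
move=> C nCa; exists (fun C' => cut_lt C' (point_cut_plus a)).
split; first by right; right; exists (point_cut_plus a).
by split=> [|C']; rewrite lt_point_cut_plus.
Qed.

End Cuts.

Lemma nonball_cut_unfilled (R F : realFieldType) (iota : R -> F)
  (f : cut R -> cut F) :
  interval_continuous f -> compatible_restriction iota f ->
  forall C, ~ ball_cut C -> ~ filled iota C.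
Proof.
move=> contf compf C nonballC [a [Ca nCa]].
have fD C' y : cutD (f C') (iota y) <-> cutD C' y by rewrite -(compf C').
have [fCa | nfCa] := classic (cutD (f C) a).
- have [C' [[_ [y [Cy nC'y]]] fC'a]] :=
    interval_open_below nonballC (contf _ (interval_open_mem (a := a))) fCa.
  by apply/nC'y/fD; exact: cutD_init (ltW (Ca y Cy)) fC'a.
- have [C' [[_ [y [C'y nCy]]] nfC'a]] :=
    interval_open_above nonballC (contf _ (interval_open_notmem (a := a))) nfCa.
  by apply/nfC'a/(cutD_init (ltW (nCa y nCy)))/fD.
Qed.

Theorem proposition4p7 (R F : realFieldType) (iota : {rmorphism R -> F})
  (iota_mono : {mono iota : x y / x <= y}) :
  (exists C : cut R, ~ ball_cut C /\ filled iota C) ->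
  ~ exists f : cut R -> cut F,
      injective f /\ interval_continuous f /\ compatible_restriction iota f.
Proof.
move=> [C [nonballC filledC]] [f [_ [contf compf]]].
exact: nonball_cut_unfilled contf compf C nonballC filledC.
Qed.
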